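(* Let $G$ be a countable group with a central subgroup $Z$ of finite index, and let $T$ be a left-transversal for $Z$ in $G$. If $\mu$ is a finitely additive left-invariant mean on $G$ then $\textup{dc}_\mu(G)=\frac{1}{|G/Z|}\sum_{t\in T}\frac{1}{[G:C_G(t)]}$. Moreover, if $M=(\mu_n)_{n=1}^\infty$ is a sequence of probability measures on $G$ that measures index uniformly then $\textup{dc}_M(G)=\frac{1}{|G/Z|}\sum_{t\in T}\frac{1}{[G:C_G(t)]}$, and the $\limsup$ in the definition of $\textup{dc}_M(G)$ is actually a limit.
   Context: A finitely additive left-invariant mean is a positive normalised left-invariant linear functional on $\ell^\infty(G)$, $\mu(X)=\int1_X\,d\mu$, and $\textup{dc}_\mu(G)=\int_x\int_y1_{\{xy=yx\}}\,d\mu(x)\,d\mu(y)$. $M$ measures index uniformly if $\mu_n(xH)\to1/[G:H]$ uniformly over $x\in G$ and subgroups $H$ (with $1/[G:H]=0$ for infinite index); $\textup{dc}_M(G)=\limsup_n(\mu_n\times\mu_n)(\{(x,y):xy=yx\})$. *)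

From HB Require Import structures.
From mathcomp Require Import all_boot all_order all_algebra.
From mathcomp Require Import all_classical all_reals all_analysis.
Set Implicit Arguments. Unset Strict Implicit. Unset Printing Implicit Defensive.
Import Order.TTheory GRing.Theory Num.Theory numFieldNormedType.Exports.
Local Open Scope classical_set_scope.
Local Open Scope ring_scope.

Record grp := Grp {
  gcar :> choiceType;
  gmul : gcar -> gcar -> gcar;
  gone : gcar;
  ginv : gcar -> gcar;
  gmulA : forall x y z, gmul x (gmul y z) = gmul (gmul x y) z;
  gmul1 : forall x, gmul gone x = x;
  gmulV : forall x, gmul (ginv x) x = gone }.

Arguments gmul {g}.
Arguments gone {g}.
Arguments ginv {g}.

Section Defs.
Variable G : grp.

Definition subgroup (H : set G) : Prop :=
  H gone /\ (forall x y, H x -> H y -> H (gmul x y)) /\ (forall x, H x -> H (ginv x)).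

Definition central (Z : set G) : Prop := forall z x, Z z -> gmul z x = gmul x z.

Definition lcoset (x : G) (H : set G) : set G := [set gmul x h | h in H].

Definition centralizer (t : G) : set G := [set x | gmul x t = gmul t x].

(* H has index n in G: the left cosets of H are in bijection with 'I_n *)
Definition has_index (H : set G) (n : nat) : Prop :=
  exists f : G -> 'I_n, (forall i : 'I_n, exists x, f x = i) /\ forall x y, f x = f y <-> H (gmul (ginv x) y).

(* 1/[G:H], with the convention 1/[G:H] = 0 when the index is infinite *)
Definition index_inv {R : realType} (H : set G) : R :=
  match pselect (exists n, has_index H n) with
  | left h => (projT1 (cid h))%:R^-1
  | right _ => 0
  end.

Definition left_transversal (Z T : set G) : Prop :=
  forall x, exists! t, T t /\ lcoset x Z t.

Definition ind {R : realType} (P : Prop) : R := if pselect P then 1 else 0.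

Definition bounded_fun {R : realType} (f : G -> R) : Prop :=
  exists M : R, forall x, `|f x| <= M.

(* finitely additive left-invariant mean: positive normalised left-invariant
   linear functional on l^oo(G) (only its values on bounded functions matter) *)
Definition lmean {R : realType} (m : (G -> R) -> R) : Prop :=
  [/\ (forall (f g : G -> R) (a b : R), bounded_fun f -> bounded_fun g ->
         m (fun x => a * f x + b * g x) = a * m f + b * m g),
      (forall f : G -> R, bounded_fun f -> (forall x, 0 <= f x) -> 0 <= m f),
      m (fun _ => 1) = 1 &
      (forall (f : G -> R) (g : G), bounded_fun f -> m (fun x => f (gmul g x)) = m f)].

Definition dc_mean {R : realType} (m : (G -> R) -> R) : R :=
  m (fun x => m (fun y => ind (gmul x y = gmul y x))).

(* probability measure on the countable discrete group G, given by its point masses *)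
Definition prob_mass {R : realType} (p : G -> R) : Prop :=
  (forall x, 0 <= p x) /\ (\esum_(x in [set: G]) (p x)%:E = 1%E).

Definition pmeas {R : realType} (p : G -> R) (A : set G) : R :=
  fine (\esum_(x in A) (p x)%:E).

Definition pmeas2 {R : realType} (p : G -> R) (S : set (G * G)) : R :=
  fine (\esum_(z in S) (p z.1 * p z.2)%:E).

Definition measures_index_uniformly {R : realType} (M : nat -> G -> R) : Prop :=
  forall e : R, 0 < e -> exists N : nat, forall n : nat, (N <= n)%N ->
    forall (x : G) (H : set G), subgroup H ->
      `| pmeas (M n) (lcoset x H) - index_inv H | < e.

Definition commuting_pairs : set (G * G) := [set z | gmul z.1 z.2 = gmul z.2 z.1].

Definition dc_seq {R : realType} (M : nat -> G -> R) (n : nat) : R :=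
  pmeas2 (M n) commuting_pairs.

Definition dc_M {R : realType} (M : nat -> G -> R) : \bar R :=
  limn_esup (fun n => (dc_seq M n)%:E).

End Defs.

From Pilot Require Import Defs.
From HB Require Import structures.
From mathcomp Require Import all_boot all_order all_algebra.
From mathcomp Require Import all_classical all_reals all_analysis.
Import Order.TTheory GRing.Theory Num.Theory numFieldNormedType.Exports.
Local Open Scope classical_set_scope.
Local Open Scope ring_scope.

(* Since [Z] is central, whether [x] commutes with [y] depends only on the coset
   [xZ]: for [x] in [tZ] it means [y \in C_G(t)], a subgroup containing [Z] and
   hence of finite index. The inner integral of [dc_mu] is therefore the
   function [x |-> 1/[G:C_G(t_x)]], constant on the [n] cosets of [Z], each of
   which has mean [1/n] by left invariance.
   For a sequence measuring index uniformly, [(mu_k x mu_k)] of the commuting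
   pairs is [sum_t mu_k(C_G(t)) mu_k(tZ)], a finite sum of products converging
   to [1/[G:C_G(t)] * 1/n]; so the sequence converges and its limsup is the
   limit. *)

Section GroupFacts.
Context {G : grp}.
Implicit Types x y z : G.

Lemma gmulgV x : gmul x (ginv x) = gone.
Proof.
have -> : gmul x (ginv x) = gmul (gmul (ginv (ginv x)) (ginv x)) (gmul x (ginv x)).
  by rewrite gmulV gmul1.
by rewrite -gmulA (gmulA (ginv x) x) gmulV gmul1 gmulV.
Qed.

Lemma gmulg1 x : gmul x gone = x.
Proof. by rewrite -(gmulV x) gmulA gmulgV gmul1. Qed.

Lemma gmulKg x y : gmul (ginv x) (gmul x y) = y.
Proof. by rewrite gmulA gmulV gmul1. Qed.

Lemma gmulKVg x y : gmul x (gmul (ginv x) y) = y.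
Proof. by rewrite gmulA gmulgV gmul1. Qed.

Lemma ginv_unique x y : gmul x y = gone -> y = ginv x.
Proof. by move=> xy1; rewrite -(gmulKg x y) xy1 gmulg1. Qed.

Lemma ginvK x : ginv (ginv x) = x.
Proof. by apply/esym/ginv_unique; rewrite gmulV. Qed.

Lemma ginvM x y : ginv (gmul x y) = gmul (ginv y) (ginv x).
Proof. by apply/esym/ginv_unique; rewrite -gmulA gmulKVg gmulgV. Qed.

Lemma gmulIg z x y : gmul x z = gmul y z -> x = y.
Proof. by move=> e; rewrite -(gmulg1 x) -(gmulgV z) gmulA e -gmulA gmulgV gmulg1. Qed.

Lemma gmulgI z x y : gmul z x = gmul z y -> x = y.
Proof. by move=> e; rewrite -(gmulKg z x) e gmulKg. Qed.

End GroupFacts.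

Section Index.
Context {G : grp}.
Implicit Types (H : set G) (x y : G).

Definition coset_map H {n} (f : G -> 'I_n) : Prop :=
  (forall i, exists x, f x = i) /\ forall x y, f x = f y <-> H (gmul (ginv x) y).

Lemma has_index_unique {H n k} : has_index H n -> has_index H k -> n = k.
Proof.
suff le_index n' k' : has_index H n' -> has_index H k' -> (n' <= k')%N.
  by move=> hn hk; apply/anti_leq; rewrite !le_index.
move=> [f [f_surj f_eq]] [g [_ g_eq]].
pose pre (i : 'I_n') := projT1 (cid (f_surj i)).
have pre_inj : injective (g \o pre).
  move=> i j; rewrite /= /pre; case: cid => x /= <-; case: cid => y /= <-.
  by move/g_eq/f_eq.
by have := leq_card _ pre_inj; rewrite !card_ord.
Qed.

Lemma index_invE (R : realType) {H n} : has_index H n -> index_inv H = n%:R^-1 :> R.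
Proof.
move=> hn; rewrite /index_inv; case: pselect => [h|]; last by case; exists n.
by rewrite (has_index_unique (projT2 (cid h)) hn).
Qed.

Lemma has_index_of_classifier (I : finType) H (g : G -> I) :
  (forall x y, g x = g y <-> H (gmul (ginv x) y)) -> exists k, has_index H k.
Proof.
move=> g_eq; pose S := [set i | `[< exists y, g y = i >]]%SET.
have gS y : g y \in S by rewrite inE; apply/asboolP; exists y.
exists #|S|, (fun y => enum_rank_in (gS gone) (g y)); split.
  move=> i; have := enum_valP i; rewrite inE => /asboolP [y gy].
  by exists y; rewrite gy enum_valK_in.
move=> x y; rewrite -g_eq; split; last by move=> ->.
exact: enum_rank_in_inj.
Qed.

(* The classes of [H] are unions of fibers of [f], so choosing a representative
   of each class turns [f] into a classifier of the left cosets of [H]. *)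
Lemma has_index_coarsening {H n} (f : G -> 'I_n) : subgroup H ->
  (forall x y, f x = f y -> H (gmul (ginv x) y)) -> exists k, has_index H k.
Proof.
move=> [H1 [HM HV]] f_sub; pose rel x y := H (gmul (ginv x) y).
have rel_refl x : rel x x by rewrite /rel gmulV.
have rel_sym x y : rel x y -> rel y x by move=> /HV; rewrite /rel ginvM ginvK.
have rel_trans x y z : rel x y -> rel y z -> rel x z.
  by move=> hxy /(HM _ _ hxy); rewrite /rel -gmulA gmulKVg.
pose rep x := xget gone [set w | rel x w].
have rel_rep x : rel x (rep x) by apply: (@xgetI _ gone _ x); apply: rel_refl.
apply: (@has_index_of_classifier _ H (f \o rep)) => x y /=; split.
  move=> /f_sub rep_xy; apply: (rel_trans _ _ _ (rel_rep x)).
  by apply: (rel_trans _ _ _ rep_xy); apply/rel_sym/rel_rep.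
move=> hxy; congr (f (xget _ _)); apply/seteqP; split => w /=.
  by apply: (rel_trans _ _ _ (rel_sym _ _ hxy)).
exact: (rel_trans _ _ _ hxy).
Qed.

Lemma lcoset1 H : lcoset gone H = H.
Proof.
apply/seteqP; split => y /=; first by move=> [h Hh <-]; rewrite gmul1.
by move=> Hy; exists y; rewrite ?gmul1.
Qed.

End Index.

Section Indicator.
Context {R : realType}.

Lemma indT (P : Prop) : P -> ind P = 1 :> R.
Proof. by rewrite /ind; case: pselect. Qed.

Lemma indF (P : Prop) : ~ P -> ind P = 0 :> R.
Proof. by rewrite /ind; case: pselect. Qed.

Lemma sum_ind_fibers {T : Type} {k} (f : T -> 'I_k) (g : 'I_k -> R) x :
  g (f x) = \sum_(i < k) g i * ind (f x = i).
Proof.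
rewrite (bigD1 (f x)) //= indT // mulr1 big1 ?addr0 // => i /eqP ne_i.
by rewrite indF ?mulr0 // => /esym.
Qed.

End Indicator.

Section Mean.
Context {R : realType} {G : grp} {m : (G -> R) -> R}.
Hypothesis m_mean : lmean m.

Lemma bounded_ind (P : G -> Prop) : Defs.bounded_fun (fun x => ind (P x) : R).
Proof. by exists 1 => x; rewrite /ind; case: pselect => ?; rewrite ?normr1 ?normr0. Qed.

Lemma bounded_cst (c : R) : Defs.bounded_fun (fun _ : G => c).
Proof. by exists `|c|. Qed.

Lemma bounded_scale (a : R) (f : G -> R) : Defs.bounded_fun f ->
  Defs.bounded_fun (fun x => a * f x).
Proof. by move=> [M fM]; exists (`|a| * M) => x; rewrite normrM ler_wpM2l. Qed.

Lemma bounded_sum (I : Type) (s : seq I) (F : I -> G -> R) :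
  (forall i, Defs.bounded_fun (F i)) -> Defs.bounded_fun (fun x => \sum_(i <- s) F i x).
Proof.
move=> F_bd; exists (\sum_(i <- s) projT1 (cid (F_bd i))) => x.
rewrite (le_trans (ler_norm_sum _ _ _)) // ler_sum // => i _.
by case: cid.
Qed.

Lemma meanD (f g : G -> R) : Defs.bounded_fun f -> Defs.bounded_fun g ->
  m (fun x => f x + g x) = m f + m g.
Proof.
case: m_mean => lin _ _ _ f_bd g_bd.
by have := lin f g 1 1 f_bd g_bd; rewrite !mul1r; under eq_fun do rewrite !mul1r.
Qed.

Lemma meanZ (a : R) (f : G -> R) : Defs.bounded_fun f ->
  m (fun x => a * f x) = a * m f.
Proof.
case: m_mean => lin _ _ _ f_bd.
have := lin f f a 0 f_bd f_bd; rewrite mul0r addr0.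
by under eq_fun do rewrite mul0r addr0.
Qed.

Lemma mean0 : m (fun _ => 0) = 0.
Proof. by have := meanZ 0 _ (bounded_cst 1); rewrite !mul0r. Qed.

Lemma mean_sum (I : Type) (s : seq I) (F : I -> G -> R) :
  (forall i, Defs.bounded_fun (F i)) ->
  m (fun x => \sum_(i <- s) F i x) = \sum_(i <- s) m (F i).
Proof.
move=> F_bd; elim: s => [|i s IHs].
  by under eq_fun do rewrite big_nil; rewrite big_nil mean0.
under eq_fun do rewrite big_cons.
by rewrite meanD ?IHs ?big_cons //; apply: bounded_sum.
Qed.

Lemma mean_ind_fiber {H : set G} {k} {f : G -> 'I_k} : coset_map H f ->
  forall i, m (fun y => ind (f y = i)) = m (fun y => ind (H y)).
Proof.
move=> [f_surj f_eq] i; have [x <-] := f_surj i; case: m_mean => _ _ _ invariant.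
rewrite -[RHS](invariant _ (ginv x)); last exact: bounded_ind.
by congr m; apply/funext => y; congr ind; apply/propext; rewrite -f_eq; split=> ->.
Qed.

Lemma mean_comp_fibers {k} (f : G -> 'I_k) (g : 'I_k -> R) :
  m (fun x => g (f x)) = \sum_(i < k) g i * m (fun y => ind (f y = i)).
Proof.
under eq_fun do rewrite (sum_ind_fibers f g).
rewrite mean_sum; last by move=> i; apply/bounded_scale/bounded_ind.
by apply: eq_bigr => i _; rewrite meanZ //; apply: bounded_ind.
Qed.

Lemma mean_ind_index {H : set G} {k} : has_index H k -> m (fun y => ind (H y)) = k%:R^-1.
Proof.
move=> [f f_coset].
have k_gt0 : (0 < k)%N by case: (f gone) => j /(leq_ltn_trans _); apply.
have := mean_comp_fibers f (fun _ => 1); case: m_mean => _ _ -> _.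
under eq_bigr do rewrite mul1r (mean_ind_fiber f_coset).
rewrite sumr_const card_ord => one_eq.
have k_neq0 : k%:R != 0 :> R by rewrite pnatr_eq0 -lt0n.
by apply: (mulIf k_neq0); rewrite mulVf // mulr_natr -one_eq.
Qed.

Lemma mean_ind_index_inv {H : set G} : (exists k, has_index H k) ->
  m (fun y => ind (H y)) = index_inv H.
Proof. by move=> [k hk]; rewrite (index_invE R hk) (mean_ind_index hk). Qed.

Lemma mean_coset_fun {H : set G} {k} {f : G -> 'I_k} (g : 'I_k -> R) :
  coset_map H f -> m (fun x => g (f x)) = k%:R^-1 * \sum_(i < k) g i.
Proof.
move=> f_coset; rewrite mean_comp_fibers mulr_sumr; apply: eq_bigr => i _.
by rewrite (mean_ind_fiber f_coset) (mean_ind_index (ex_intro _ f f_coset)) mulrC.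
Qed.

End Mean.

Section Esum.
Context {R : realType}.
Local Open Scope ereal_scope.

Lemma ge0_esumZl {T : choiceType} {S : set T} {r : R} {a : T -> \bar R} :
  (0 <= r)%R -> (forall i, 0 <= a i) ->
  \esum_(i in S) (r%:E * a i) = r%:E * \esum_(i in S) a i.
Proof.
move=> r0 a0; rewrite /esum -ereal_supZl //; last first.
  by apply/set0P; exists (\sum_(i \in set0) a i), set0; [exact: fsets_set0|].
congr ereal_sup; apply/seteqP; split => y /=.
  by move=> [A hA <-]; exists (\sum_(i \in A) a i); [exists A|rewrite ge0_mule_fsumr].
by move=> [_ [A hA <-] <-]; exists A => //; rewrite ge0_mule_fsumr.
Qed.

Lemma esum_fibers {T : choiceType} {k} (f : T -> 'I_k) (a : T -> \bar R) :
  (forall x, 0 <= a x) ->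
  \esum_(x in [set: T]) a x = \sum_(i < k) \esum_(x in [set x | f x = i]) a x.
Proof.
move=> a0; under eq_bigr do rewrite esum_mkcond.
rewrite -esum_sum; last by move=> x i _ _; case: ifP.
apply: eq_esum => x _; rewrite (bigD1 (f x)) //= mem_set // big1 ?adde0 // => i ne_i.
by rewrite ifF //; apply/negbTE; rewrite notin_setE /= => fx_i; rewrite fx_i eqxx in ne_i.
Qed.

End Esum.

Section ProbMass.
Context {R : realType} {G : grp} {p : G -> R}.
Hypothesis p_prob : prob_mass p.

Lemma pmeasE (A : set G) : (pmeas p A)%:E = \esum_(x in A) (p x)%:E.
Proof.
case: p_prob => p0 p1; have pE0 x : (0 <= (p x)%:E)%E by rewrite lee_fin.
rewrite fineK // ge0_fin_numE ?esum_ge0 //; apply: le_lt_trans (ltry 1).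
by rewrite -p1 esum_mkcond; apply: le_esum => x _; case: ifP.
Qed.

Lemma pmeas_ge0 (A : set G) : 0 <= pmeas p A.
Proof. by rewrite -lee_fin pmeasE esum_ge0 // => x _; rewrite lee_fin; case: p_prob. Qed.

Lemma pmeas2_fibered {k} (f : G -> 'I_k) (A : 'I_k -> set G) :
  pmeas2 p [set z | A (f z.1) z.2] =
  \sum_(i < k) pmeas p (A i) * pmeas p [set x | f x = i].
Proof.
case: p_prob => p0 _; have pE0 x : (0 <= (p x)%:E)%E by rewrite lee_fin.
have -> : [set z | A (f z.1) z.2] = [set: G] `*`` (A \o f).
  by apply/seteqP; split => -[x y] /=; [split|case].
rewrite /pmeas2 -(esum_esum (a := fun x y => (p x * p y)%:E)) /=; last first.
  by move=> x y _ _; rewrite lee_fin mulr_ge0.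
rewrite (esum_fibers f); last first.
  by move=> x; apply: esum_ge0 => y _; rewrite lee_fin mulr_ge0.
rewrite -[RHS]/(fine (\sum_(i < k) pmeas p (A i) * pmeas p [set x | f x = i])%:E).
rewrite -sumEFin; congr fine; apply: eq_bigr => i _.
transitivity (\esum_(x in [set x | f x = i]) ((pmeas p (A i))%:E * (p x)%:E))%E.
  apply: eq_esum => x /= <-; under eq_esum do rewrite EFinM.
  by rewrite (ge0_esumZl (p0 x) pE0) -pmeasE muleC.
by rewrite (ge0_esumZl (pmeas_ge0 _) pE0) -pmeasE EFinM.
Qed.

End ProbMass.

Section UniformIndex.
Context {R : realType} {G : grp} {M : nat -> G -> R}.
Hypothesis M_unif : measures_index_uniformly M.

Lemma pmeas_lcoset_cvg x {H : set G} : subgroup H ->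
  (fun k => pmeas (M k) (lcoset x H)) @ \oo --> (index_inv H : R).
Proof.
move=> H_sub; apply/cvgrPdist_lt => e e_gt0; have [N HN] := M_unif _ e_gt0.
by exists N => // k /= Nk; rewrite distrC; apply: HN.
Qed.

End UniformIndex.

Lemma centralizer_subgroup {G : grp} (t : G) : subgroup (centralizer t).
Proof.
rewrite /centralizer; split=> /=; first by rewrite gmul1 gmulg1.
split=> [x y /= xt yt | x /= xt]; first by rewrite -gmulA yt gmulA xt -gmulA.
apply: (@gmulgI _ x); rewrite gmulA gmulgV gmul1.
by apply: (@gmulIg _ x); rewrite -!gmulA gmulV gmulg1 xt.
Qed.

Section Transversal.
Context {G : grp} {Z T : set G} (Ttr : left_transversal Z T).
Context {n : nat} {f : G -> 'I_n} (f_coset : coset_map Z f).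

Lemma lcoset_coset_map x y : lcoset x Z y <-> f x = f y.
Proof.
case: f_coset => _ ->; split; first by move=> [z Zz <-]; rewrite gmulKg.
by move=> Zxy; exists (gmul (ginv x) y); rewrite ?gmulKVg.
Qed.

Lemma transversal_coset_rep i : exists t, T t /\ f t = i.
Proof.
case: f_coset => f_surj _; have [x <-] := f_surj i.
by have [t [[Tt /lcoset_coset_map xt] _]] := Ttr x; exists t.
Qed.

Definition trep i : G := projT1 (cid (transversal_coset_rep i)).

Lemma trep_T i : T (trep i).
Proof. by rewrite /trep; case: cid => t []. Qed.

Lemma f_trep i : f (trep i) = i.
Proof. by rewrite /trep; case: cid => t []. Qed.

Lemma transversalE : T = range trep.
Proof.
apply/seteqP; split=> [t Tt | _ [i _ <-]]; last exact: trep_T.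
exists (f t) => //; have [t0 [_ t0_unique]] := Ttr t.
have t0E u : T u -> f t = f u -> t0 = u.
  by move=> Tu tu; apply: t0_unique; split=> //; apply/lcoset_coset_map.
by rewrite -(t0E t) // (t0E (trep (f t))) ?f_trep //; apply: trep_T.
Qed.

Lemma fsum_transversal {R : realType} (F : G -> R) :
  \sum_(t \in T) F t = \sum_(i < n) F (trep i).
Proof.
rewrite transversalE fsbig_image; last by move=> i j _ _ /(congr1 f); rewrite !f_trep.
rewrite (fsbigE (enum 'I_n)) ?enum_uniq //; last by move=> i _; rewrite mem_enum.
by rewrite big_enum_cond /=; apply: eq_bigl => i; rewrite in_setT.
Qed.

Lemma lcoset_trep i : lcoset (trep i) Z = [set x | f x = i].
Proof.
apply/seteqP; split=> x /=; first by move/lcoset_coset_map; rewrite f_trep.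
by move=> <-; apply/lcoset_coset_map; rewrite f_trep.
Qed.

Hypothesis Z_central : central Z.

Lemma centralizer_has_index (t : G) : exists k, has_index (centralizer t) k.
Proof.
apply: (has_index_coarsening f (centralizer_subgroup t)) => x y.
by case: f_coset => _ -> Zxy; apply: Z_central.
Qed.

(* Writing [x = t z] with [z] central, [x] and [t] have the same centralizer. *)
Lemma commute_trep x y : gmul x y = gmul y x <-> centralizer (trep (f x)) y.
Proof.
have : lcoset (trep (f x)) Z x by apply/lcoset_coset_map; rewrite f_trep.
move: (trep _) => t [z Zz <-].
rewrite /centralizer /=; split=> [yz | yt].
  by apply/esym/(@gmulIg _ z); rewrite -gmulA -(Z_central _ _ Zz) gmulA yz gmulA.
by rewrite -gmulA (Z_central _ y Zz) gmulA -yt -gmulA.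
Qed.

Lemma dc_mean_transversal {R : realType} {m : (G -> R) -> R} : lmean m ->
  dc_mean m = n%:R^-1 * \sum_(i < n) index_inv (centralizer (trep i)).
Proof.
move=> m_mean; rewrite /dc_mean -(mean_coset_fun m_mean _ f_coset).
congr m; apply/funext => x.
rewrite -(mean_ind_index_inv m_mean (centralizer_has_index _)).
by congr m; apply/funext => y; congr ind; apply/propext/commute_trep.
Qed.

Lemma pmeas2_commuting_pairs {R : realType} (p : G -> R) : prob_mass p ->
  pmeas2 p (@commuting_pairs G) =
  \sum_(i < n) pmeas p (centralizer (trep i)) * pmeas p (lcoset (trep i) Z).
Proof.
move=> p_prob; under eq_bigr do rewrite lcoset_trep.
rewrite -(pmeas2_fibered p_prob f); congr pmeas2.
by apply/seteqP; split=> -[x y]; rewrite /commuting_pairs /= commute_trep.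
Qed.

Lemma dc_seq_cvg {R : realType} {M : nat -> G -> R} :
  (forall k, prob_mass (M k)) -> measures_index_uniformly M -> subgroup Z ->
  (dc_seq M : R^nat) @ \oo --> n%:R^-1 * \sum_(i < n) index_inv (centralizer (trep i)).
Proof.
move=> M_prob M_unif Z_sub; rewrite mulr_sumr.
under eq_cvg do rewrite /dc_seq pmeas2_commuting_pairs //.
apply: cvg_big => [|i _]; first exact: add_continuous.
rewrite mulrC -(index_invE R (ex_intro _ f f_coset)); apply: cvgM.
  have := pmeas_lcoset_cvg M_unif gone (centralizer_subgroup (trep i)).
  by rewrite lcoset1.
exact: (pmeas_lcoset_cvg M_unif).
Qed.

End Transversal.

Theorem proposition7p1 (R : realType) (G : grp) (Z T : set G) :
  countable [set: G] ->
  subgroup Z -> central Z -> (exists n, has_index Z n) ->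
  left_transversal Z T ->
  let c : R := index_inv Z * (\sum_(t \in T) (index_inv (centralizer t) : R)) in
  (forall m : (G -> R) -> R, lmean m -> dc_mean m = c) /\
  (forall M : nat -> G -> R, (forall n, prob_mass (M n)) ->
     measures_index_uniformly M ->
     dc_M M = c%:E /\ ((dc_seq M : R^nat) @ \oo --> c)).
Proof.
move=> _ Z_sub Z_central [n [f f_coset]] Ttr c.
have cE : c = n%:R^-1 * \sum_(i < n) index_inv (centralizer (trep Ttr f_coset i)).
  by rewrite /c (index_invE R (ex_intro _ f f_coset)) (fsum_transversal Ttr f_coset).
split=> [m m_mean | M M_prob M_unif].
  by rewrite cE (dc_mean_transversal Ttr f_coset Z_central m_mean).
have dc_cvg := dc_seq_cvg Ttr f_coset Z_central M_prob M_unif Z_sub.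
rewrite -cE in dc_cvg; split=> //.
have dc_ecvg : (fun k => (dc_seq M k)%:E) @ \oo --> c%:E.
  by apply: cvg_EFin => //; apply: nearW.
by rewrite /dc_M; have [_ ->] := cvg_limn_einf_sup dc_ecvg.
Qed.
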